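(* Let a pebble placement strategy $\Lambda$ be fixed: for every instance (a connected simple undirected anonymous graph $G$ with port numbers, a source node $s$ and a treasure node $t$), $\Lambda$ places classical pebbles on some set of nodes of $G$. Then there is no deterministic treasure hunt algorithm for an oblivious agent that, for every instance, brings the agent from $s$ to the treasure $t$ when pebbles are placed according to $\Lambda$. That is, for every deterministic oblivious agent algorithm there is an instance on which the agent never reaches the treasure.
   Context: An anonymous graph is a connected simple undirected graph whose nodes are unlabelled and indistinguishable; at each node $v$ the incident edges carry distinct local labels (port numbers) from $\{0,\dots,\deg(v)-1\}$, so each edge has two independent port numbers, one at each endpoint. An agent starts at a source node $s$ and must reach a stationary target node $t$ (the treasure). The agent acts in rounds; in each round it ''looks'' (learns the degree of its current node and whether a pebble is present there), computes, and then either moves along one chosen port or stays. A pebble is a permanent classical marker placed on a node by an oracle (the pebble placement strategy) before the search, with knowledge of the whole instance. The agent is oblivious: it remembers nothing from previous rounds, so in a deterministic algorithm its action in a round is a function only of the degree of the current node and whether the current node carries a pebble. *)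

From mathcomp Require Import all_boot.
Set Implicit Arguments. Unset Strict Implicit. Unset Printing Implicit Defensive.

Record PGraph := mkPGraph {
  V : finType;
  deg : V -> nat;
  nbr : forall v : V, 'I_(deg v) -> V
}.

Definition adj (G : PGraph) : rel (V G) :=
  fun u w => [exists i : 'I_(deg u), @nbr G u i == w].

(* Well-formed instance graph: simple (no loops, no multi-edges: distinct ports
   lead to distinct neighbours), undirected (every edge is seen from both ends,
   so the port at the other endpoint is the unique j with nbr j = v), connected. *)
Definition simple_connected (G : PGraph) : Prop :=
  [/\ (forall (v : V G) (i : 'I_(deg v)), @nbr G v i <> v),
      (forall (v : V G) (i j : 'I_(deg v)), @nbr G v i = @nbr G v j -> i = j),
      (forall (v : V G) (i : 'I_(deg v)),
          exists j : 'I_(deg (@nbr G v i)), @nbr G (@nbr G v i) j = v)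
    & (forall u w : V G, connect (@adj G) u w)].

Definition pebble_strategy :=
  forall (G : PGraph) (s t : V G), {set V G}.

(* A deterministic oblivious agent: its action depends only on the degree d of
   the current node and on whether a pebble is present; it either stays (None)
   or moves along a port in {0, ..., d-1}. *)
Definition oblivious_algo := forall d : nat, bool -> option 'I_d.

Definition step (G : PGraph) (P : {set V G}) (A : oblivious_algo) (v : V G) : V G :=
  match A (deg v) (v \in P) with
  | None => v
  | Some i => @nbr G v i
  end.

Definition pos (G : PGraph) (P : {set V G}) (A : oblivious_algo) (s : V G) (k : nat) : V G :=
  iter k (@step G P A) s.

From mathcomp Require Import all_boot.
Set Implicit Arguments. Unset Strict Implicit. Unset Printing Implicit Defensive.

(* Take a star with three leaves and start the agent at its centre. Whatever
   the pebbles are, at the centre the agent sees degree 3 and one pebble bit,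
   so it can take at most two of the three ports; put the treasure on a leaf
   behind a port it never takes. The only edge into that leaf starts at the
   centre, so the agent never gets there. *)

Lemma exists_unused_port (A : oblivious_algo) (d : nat) :
  2 < d -> exists i : 'I_d, forall b, A d b != Some i.
Proof.
move=> d_gt2.
have /existsP[i /forallP unused] : [exists i : 'I_d, [forall b, A d b != Some i]].
  apply: contraLR d_gt2 => /existsPn all_used; rewrite -leqNgt.
  set used := pmap id [:: A d false; A d true].
  have /subset_leq_card : 'I_d \subset used.
    apply/subsetP => i _; rewrite mem_pmap map_id.
    by have /forallPn[[] /negPn /eqP <-] := all_used i; rewrite !inE eqxx ?orbT.
  rewrite card_ord => /leq_trans; apply; apply: leq_trans (card_size _) _.
  by rewrite /used /=; case: (A d false); case: (A d true).
by exists i.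
Qed.

Section Avoidance.

Variables (G : PGraph) (P : {set V G}) (A : oblivious_algo) (t : V G).

Lemma step_neq (v : V G) :
  v != t -> (forall i : 'I_(deg v), A (deg v) (v \in P) = Some i -> nbr i != t) ->
  step P A v != t.
Proof. by rewrite /step; case: (A _ _) => [i|] // _ /(_ i erefl). Qed.

Lemma pos_neq (s : V G) :
  s != t -> (forall v, v != t -> step P A v != t) -> forall k, pos P A s k != t.
Proof. by move=> s_t step_t; elim=> [|k IHk] //; rewrite /pos iterS; apply: step_t. Qed.

End Avoidance.

Section Star.

Variable n : nat.

Definition star_deg (v : option 'I_n) : nat := if v is Some _ then 1 else n.

Definition star_nbr (v : option 'I_n) : 'I_(star_deg v) -> option 'I_n :=
  match v with None => fun i => Some i | Some _ => fun _ => None end.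

Definition star : PGraph := mkPGraph star_nbr.

Lemma star_simple_connected : simple_connected star.
Proof.
split=> [[x|] i | [x|] i j | [x|] i | u w] //=.
- by move: i j => /= i j _; rewrite [i]ord1 [j]ord1.
- by case.
- by exists x.
- by exists ord0.
have center_conn (v : option 'I_n) :
    connect (@adj star) v None /\ connect (@adj star) None v.
  case: v => [x|] //; split; apply: connect1; apply/existsP; first by exists ord0.
  by exists x.
exact: connect_trans (center_conn u).1 (center_conn w).2.
Qed.

Lemma star_leaf_unreached (P : {set option 'I_n}) (A : oblivious_algo) (q : 'I_n) :
  (forall b, A n b != Some q) -> forall k, @pos star P A None k != Some q.
Proof.
move=> q_unused; apply: pos_neq => // v v_q; apply: step_neq => // i.
by case: v {v_q} i => [x|] //= i <-.
Qed.

End Star.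

Theorem theorem1 :
  forall (Lambda : pebble_strategy) (A : oblivious_algo),
    exists (G : PGraph) (s t : V G),
      simple_connected G /\
      forall k : nat, pos (Lambda G s t) A s k <> t.
Proof.
move=> Lambda A.
have [q q_unused] := @exists_unused_port A 3 isT.
exists (star 3), None, (Some q); split; first exact: star_simple_connected.
by move=> k; apply/eqP; apply: star_leaf_unreached.
Qed.
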